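(* Let $\Sigma=\{a\}$, $k=4$, and $\alpha=\big((_1\,\backslash4\,a)_1\,(_2\,\backslash3)_2\,(_3\,\backslash2\,a)_3\,(_4\,\backslash1\,\backslash3)_4\big)^\ast$. Then $L(\alpha)=\{a^{n(n+7)(2n+1)/6} : n\in\mathbb{N}\}$.
   Context: For $k\ge1$, $[k]=\{1,\dots,k\}$, $B_k=\{[_i,\,]_i:i\in[k]\}$ fresh brackets; $g$ fixes letters of $\Sigma$ and erases brackets. $\mathcal{R}_k(\alpha)$: the regular language over $\Sigma\uplus B_k\uplus[k]$ obtained by reading the rewb $\alpha$ as a regular expression with $\backslash i$ as the letter $i$ and $(_i\alpha_0)_i$ as $[_i\mathcal{R}_k(\alpha_0)]_i$. Dereferencing $\mathcal{D}_k$: repeatedly take the leftmost number $i\in[k]$ in the current string; if no $[_i$ lies to its left delete it (unbound references denote $\varepsilon$); else take the nearest $[_i$ to its left; if no $]_i$ lies between them the result is undefined; else replace this $i$ by $g(u)$, $u$ the string strictly between that $[_i$ and the first subsequent $]_i$; when no numbers remain delete all brackets. $L(\alpha)=\{\mathcal{D}_k(v):v\in\mathcal{R}_k(\alpha)\}$. *)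

From Stdlib Require Import List Arith.
Import ListNotations.

Set Implicit Arguments.

(* Symbols over Sigma ⊎ B_k ⊎ [k]: letters, open brackets [_i,
   close brackets ]_i, and numbers (references) i. *)
Inductive sym (S : Type) : Type :=
| Let (x : S)
| Open (i : nat)
| Close (i : nat)
| Ref (i : nat).
Arguments Open {S} i.
Arguments Close {S} i.
Arguments Ref {S} i.

Inductive rewb (S : Type) : Type :=
| REmpty
| REps
| RChr (x : S)
| RCat (r1 r2 : rewb S)
| RAlt (r1 r2 : rewb S)
| RStar (r : rewb S)
| RGrp (i : nat) (r : rewb S)
| RBref (i : nat).
Arguments REmpty {S}.
Arguments REps {S}.
Arguments RBref {S} i.

Inductive inR (S : Type) : rewb S -> list (sym S) -> Prop :=
| inR_eps : inR REps []
| inR_chr x : inR (RChr x) [Let x]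
| inR_cat r1 r2 w1 w2 : inR r1 w1 -> inR r2 w2 -> inR (RCat r1 r2) (w1 ++ w2)
| inR_altl r1 r2 w : inR r1 w -> inR (RAlt r1 r2) w
| inR_altr r1 r2 w : inR r2 w -> inR (RAlt r1 r2) w
| inR_star0 r : inR (RStar r) []
| inR_starS r w1 w2 : inR r w1 -> inR (RStar r) w2 -> inR (RStar r) (w1 ++ w2)
| inR_grp i r w : inR r w -> inR (RGrp i r) (Open i :: w ++ [Close i])
| inR_bref i : inR (RBref i) [Ref i].

(* g: fixes letters, erases brackets (and numbers; only applied to
   number-free strings). *)
Fixpoint g (S : Type) (w : list (sym S)) : list S :=
  match w with
  | [] => []
  | Let x :: w' => x :: g w'
  | _ :: w' => g w'
  end.

(* Given the already-processed prefix in REVERSED order [acc], find the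
   nearest [_i (to the left of the current position) and return the
   (forward) string lying strictly between it and the current position. *)
Fixpoint find_open (S : Type) (i : nat) (acc after : list (sym S))
  : option (list (sym S)) :=
  match acc with
  | [] => None
  | Open j :: acc' =>
      if Nat.eqb j i then Some after else find_open i acc' (Open j :: after)
  | c :: acc' => find_open i acc' (c :: after)
  end.

Fixpoint take_until_close (S : Type) (i : nat) (seg : list (sym S))
  : option (list (sym S)) :=
  match seg with
  | [] => None
  | Close j :: seg' =>
      if Nat.eqb j i then Some []
      else option_map (cons (Close j)) (take_until_close i seg')
  | c :: seg' => option_map (cons c) (take_until_close i seg')
  end.

(* Dereferencing, processing numbers from left to right (i.e. always the
   leftmost remaining number).  [acc] is the processed prefix reversed;
   it never contains numbers.  None = undefined. *)
Fixpoint deref_aux (S : Type) (acc w : list (sym S)) : option (list S) :=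
  match w with
  | [] => Some (g (rev acc))
  | Ref i :: w' =>
      match find_open i acc [] with
      | None => deref_aux acc w'      (* unbound reference: delete it *)
      | Some seg =>
          match take_until_close i seg with
          | None => None
          | Some u => deref_aux (rev (map (@Let S) (g u)) ++ acc) w'
          end
      end
  | c :: w' => deref_aux (c :: acc) w'
  end.

Definition deref (S : Type) (w : list (sym S)) : option (list S) :=
  deref_aux [] w.

Definition lang (S : Type) (alpha : rewb S) (w : list S) : Prop :=
  exists v, inR alpha v /\ deref v = Some w.

Definition a : unit := tt.

Definition alpha11 : rewb unit :=
  RStar (RCat (RGrp 1 (RCat (RBref 4) (RChr a)))
        (RCat (RGrp 2 (RBref 3))
        (RCat (RGrp 3 (RCat (RBref 2) (RChr a)))
              (RGrp 4 (RCat (RBref 1) (RBref 3)))))).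

(* The body of the star has exactly one word, so R_4(alpha11) consists of
   the powers of that word.  Dereferencing such a power proceeds iteration
   by iteration: after each copy of the body, the most recent groups 1..4
   hold a^x, a^y, a^z, a^w, and the next copy rebinds them to
   a^(w+1), a^z, a^(z+1), a^(z+w+2), since only groups 3 and 4 feed the
   next iteration (the first copy behaves as if z = w = 0, because unbound
   references denote the empty word).  Hence the output is a^N with N the
   total size of the groups produced, a cubic in the number of iterations. *)
From Stdlib Require Import List Arith Lia.
Import ListNotations.

Section StarOfSingleton.
Variable Sigma : Type.

Lemma star_of_singleton (r : rewb Sigma) (p v : list (sym Sigma)) :
  (forall u, inR r u -> u = p) ->
  inR (RStar r) v -> exists n, v = concat (repeat p n).
Proof.
  intros Hr Hv; remember (RStar r) as rs eqn:E.
  induction Hv; try discriminate.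
  - now exists 0.
  - injection E as ->.
    destruct IHHv2 as [n ->]; [reflexivity |].
    exists (S n); simpl; now rewrite (Hr _ Hv1).
Qed.

Lemma star_powers (r : rewb Sigma) (p : list (sym Sigma)) (n : nat) :
  inR r p -> inR (RStar r) (concat (repeat p n)).
Proof. intro Hp; induction n; simpl; constructor; assumption. Qed.
End StarOfSingleton.

Section LetterRuns.
Variable Sigma : Type.

Lemma g_app (v1 v2 : list (sym Sigma)) : g (v1 ++ v2) = g v1 ++ g v2.
Proof. induction v1 as [|[] v1 IH]; simpl; rewrite ?IH; reflexivity. Qed.

Lemma g_rev (v : list (sym Sigma)) : g (rev v) = rev (g v).
Proof.
  induction v as [|c v IH]; [reflexivity |].
  simpl; rewrite g_app, IH; destruct c; simpl; rewrite ?app_nil_r; reflexivity.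
Qed.

Lemma g_letters (u : list Sigma) : g (map (@Let Sigma) u) = u.
Proof. induction u as [|x u IH]; simpl; congruence. Qed.

Lemma find_open_letters i (u : list Sigma) acc post :
  find_open i (map (@Let Sigma) u ++ acc) post =
  find_open i acc (rev (map (@Let Sigma) u) ++ post).
Proof.
  revert post; induction u as [|x u IH]; intro post; simpl; [reflexivity |].
  now rewrite IH, <- app_assoc.
Qed.

Lemma take_until_close_letters i (u : list Sigma) rest :
  take_until_close i (map (@Let Sigma) u ++ Close i :: rest) = Some (map (@Let Sigma) u).
Proof. induction u as [|x u IH]; simpl; [now rewrite Nat.eqb_refl | now rewrite IH]. Qed.

Lemma deref_aux_letters (u : list Sigma) acc w :
  deref_aux acc (map (@Let Sigma) u ++ w) =
  deref_aux (rev (map (@Let Sigma) u) ++ acc) w.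
Proof.
  revert acc; induction u as [|x u IH]; intro acc; simpl; [reflexivity |].
  now rewrite IH, <- app_assoc.
Qed.
End LetterRuns.

Lemma unary_word (u : list unit) : u = repeat a (length u).
Proof. induction u as [|[] u IH]; simpl; [reflexivity | f_equal; exact IH]. Qed.

(* The run a^n as a string of symbols; the lemmas below specialize the
   letter-run facts to it, using that a run is its own reversal. *)
Definition letters (n : nat) : list (sym unit) := map (@Let unit) (repeat a n).

Lemma rev_letters n : rev (letters n) = letters n.
Proof. unfold letters; now rewrite <- map_rev, rev_repeat. Qed.

Lemma g_letters_run n : g (letters n) = repeat a n.
Proof. apply g_letters. Qed.

Lemma letters_S n : letters (S n) = Let a :: letters n.
Proof. reflexivity. Qed.

Lemma letters_add m n : letters (m + n) = letters m ++ letters n.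
Proof. unfold letters; now rewrite repeat_app, map_app. Qed.

Lemma letters_snoc n l : letters n ++ Let a :: l = Let a :: letters n ++ l.
Proof. unfold letters; induction n; simpl; congruence. Qed.

Lemma find_open_run i n acc post :
  find_open i (letters n ++ acc) post = find_open i acc (letters n ++ post).
Proof. rewrite <- rev_letters at 2; apply find_open_letters. Qed.

Lemma take_until_close_run i n rest :
  take_until_close i (letters n ++ Close i :: rest) = Some (letters n).
Proof. apply take_until_close_letters. Qed.

(* Substituting a reference to a group holding a^n pushes a^n. *)
Lemma copy_run n : rev (map (@Let unit) (g (letters n))) = letters n.
Proof. now rewrite g_letters_run, <- rev_letters. Qed.

Arguments letters : simpl never.

Definition body11 : rewb unit :=
  RCat (RGrp 1 (RCat (RBref 4) (RChr a)))
  (RCat (RGrp 2 (RBref 3))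
  (RCat (RGrp 3 (RCat (RBref 2) (RChr a)))
        (RGrp 4 (RCat (RBref 1) (RBref 3))))).

Definition body_word : list (sym unit) :=
  [Open 1; Ref 4; Let a; Close 1; Open 2; Ref 3; Close 2;
   Open 3; Ref 2; Let a; Close 3; Open 4; Ref 1; Ref 3; Close 4].

Lemma alpha11_star : alpha11 = RStar body11.
Proof. reflexivity. Qed.

Lemma body11_word : inR body11 body_word.
Proof.
  assert (H : exists v, inR body11 v /\ v = body_word)
    by (eexists; split; [repeat econstructor | reflexivity]).
  now destruct H as [v [Hv <-]].
Qed.

(* [body11] has no star or alternative, so inverting its derivation
   determines every piece of the word. *)
Lemma body11_unique v : inR body11 v -> v = body_word.
Proof.
  intro Hv; unfold body11 in Hv.
  repeat match goal with H : inR _ _ |- _ => inversion H; subst; clear H end.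
  reflexivity.
Qed.

Lemma R_alpha11 v : inR alpha11 v <-> exists n, v = concat (repeat body_word n).
Proof.
  rewrite alpha11_star; split.
  - apply star_of_singleton, body11_unique.
  - intros [n ->]; apply star_powers, body11_word.
Qed.

(* The reversed accumulator after one iteration that filled groups
   1, 2, 3, 4 with a^x, a^y, a^z, a^w. *)
Definition frame (x y z w : nat) : list (sym unit) :=
  [Close 4] ++ letters w ++ [Open 4; Close 3] ++ letters z ++ [Open 3; Close 2]
  ++ letters y ++ [Open 2; Close 1] ++ letters x ++ [Open 1].

(* One iteration: group 1 copies group 4 and adds a, group 2 copies
   group 3, group 3 copies the new group 2 and adds a, group 4 copies the
   new groups 1 and 3.  The computation is a symbolic run of [deref_aux]. *)
Lemma frame_step x y z w acc rest :
  deref_aux (frame x y z w ++ acc) (body_word ++ rest) =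
  deref_aux (frame (S w) z (S z) (S z + S w) ++ frame x y z w ++ acc) rest.
Proof.
  unfold frame, body_word; rewrite letters_add, !letters_S.
  repeat (progress (simpl; repeat rewrite ?find_open_run, ?take_until_close_run,
     ?copy_run, ?letters_snoc, <- ?app_assoc)).
  reflexivity.
Qed.

(* The first iteration has no earlier groups; its unbound references are
   empty, so it produces the groups of the step from z = w = 0. *)
Lemma first_step rest :
  deref_aux [] (body_word ++ rest) = deref_aux (frame 1 0 1 2 ++ []) rest.
Proof. reflexivity. Qed.

(* Number of letters produced by [n] further iterations from a state
   whose last groups 3 and 4 hold a^z and a^w. *)
Fixpoint added (n z w : nat) : nat :=
  match n with
  | 0 => 0
  | S n => S w + z + S z + (S z + S w) + added n (S z) (S z + S w)
  end.

Lemma size_frame x y z w : length (g (frame x y z w)) = x + y + z + w.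
Proof.
  unfold frame; rewrite !g_app, !length_app, !g_letters_run, !repeat_length.
  simpl; lia.
Qed.

Lemma deref_powers n : forall x y z w acc,
  deref_aux (frame x y z w ++ acc) (concat (repeat body_word n)) =
  Some (repeat a (length (g (frame x y z w ++ acc)) + added n z w)).
Proof.
  induction n as [|n IH]; intros x y z w acc.
  - cbn [concat repeat deref_aux]; rewrite Nat.add_0_r, (unary_word (g (rev _))), g_rev, length_rev.
    reflexivity.
  - cbn [repeat concat]; rewrite frame_step, IH, !g_app, !length_app, !size_frame.
    cbn [added]; f_equal; f_equal; lia.
Qed.

Lemma deref_alpha11_power n :
  deref (concat (repeat body_word n)) = Some (repeat a (added n 0 0)).
Proof.
  destruct n as [|n]; [reflexivity |].
  unfold deref; cbn [repeat concat]; rewrite first_step, deref_powers, app_nil_r, size_frame.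
  reflexivity.
Qed.

Lemma added_closed_form n : forall z w,
  6 * added n z w = 2 * n * n * n + 3 * (2 * z + 5) * n * n + (12 * w + 12 * z + 7) * n.
Proof.
  induction n as [|n IH]; intros z w; [simpl; ring |].
  cbn [added]; rewrite Nat.mul_add_distr_l, IH; ring.
Qed.

Lemma added_from_start n : added n 0 0 = n * (n + 7) * (2 * n + 1) / 6.
Proof.
  apply Nat.div_unique_exact; [discriminate |].
  rewrite added_closed_form; ring.
Qed.

Theorem mainTheorem11 :
  forall w : list unit,
    lang alpha11 w <->
    exists n : nat, w = repeat a (n * (n + 7) * (2 * n + 1) / 6).
Proof.
  intro w; unfold lang; split.
  - intros [v [Hv Hd]].
    apply R_alpha11 in Hv as [n ->].
    rewrite deref_alpha11_power, added_from_start in Hd.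
    injection Hd as <-; now exists n.
  - intros [n ->].
    exists (concat (repeat body_word n)); split.
    + apply R_alpha11; now exists n.
    + now rewrite deref_alpha11_power, added_from_start.
Qed.
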